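(* Let $p$ be a prime and $G=\mathbb{S}_p$ or $\mathbb{A}_p$. If $\mathcal{C}$ is a conjugacy class of elements of order $p$ in $G$, then $K_{\mathcal{C}}$ is irreducible.
   Context: For a finite group $G$ and a subset $\mathcal{C}\subseteq G\setminus\{1\}$ closed under conjugation, the Killing form $K_{\mathcal{C}}$ is the bilinear form on the complex vector space with basis $\mathcal{C}$ given on basis elements by $K_{\mathcal{C}}(a,b)=|C_G(ab)\cap\mathcal{C}|$. $K_{\mathcal{C}}$ is irreducible if the graph with vertex set $\mathcal{C}$, in which distinct $a,b$ are adjacent iff $C_G(ab)\cap\mathcal{C}\neq\emptyset$, is connected, and reducible otherwise. *)

From mathcomp Require Import all_boot all_fingroup all_solvable.
Set Implicit Arguments. Unset Strict Implicit. Unset Printing Implicit Defensive.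
Local Open Scope group_scope.

Definition killing_adj (gT : finGroupType) (G C : {set gT}) : rel gT :=
  fun a b => (a != b) && ('C_G[a * b] :&: C != set0).

Definition killing_graph (gT : finGroupType) (G C : {set gT}) : rel gT :=
  fun a b => [&& a \in C, b \in C & killing_adj G C a b].

(* K_C is irreducible iff the graph on C is connected. *)
Definition killing_irreducible (gT : finGroupType) (G C : {set gT}) : Prop :=
  forall a b, a \in C -> b \in C -> connect (killing_graph G C) a b.

From mathcomp Require Import all_boot all_fingroup all_solvable.
Set Implicit Arguments. Unset Strict Implicit. Unset Printing Implicit Defensive.
Local Open Scope group_scope.

(* Let H be the set of those g in G for which x and x^g lie in the same
   connected component of the Killing graph on C = x^G. As G acts on the graph
   by conjugation, H is a subgroup, and the graph is connected once H = G.
   If x^g is a power of x then e = x commutes with x x^g, so the normaliser of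
   <x> lies in H; for p <= 3 this is all of G, as <x> has index at most 2.
   For p >= 5 let t = (u, x^2 u), which commutes with t^x = (x u, x^3 u), and
   h = t t^x. Then x x^h = (x^t)^2 commutes with x^(nt) = (x^n)^t, a power of
   x^t. Choosing n odd in N(<x>), which the Frattini argument provides since <x>
   is a Sylow subgroup of Alt_p, makes nt even, so x^(nt) is in C and h is in H,
   whence so is x^t = (h x^-1)^-1. The group <x, x^t> lies in Alt_p and is
   normalised by <t, x> = Sym_p, so it is Alt_p by simplicity, and finally
   Sym_p = Alt_p N(<x>). *)

Lemma mul_conj_involution_prod (gT : finGroupType) (x t : gT) :
  t * t = 1 -> commute t (t ^ x) -> x * x ^ (t * t ^ x) = (x ^ t) ^+ 2.
Proof.
move=> tt; have tV : t^-1 = t by apply/eqP; rewrite eq_invg_mul tt.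
rewrite /commute expgS expg1 !conjgE !invMg tV invgK !mulgA mulgV mul1g => ct.
have -> : t * x * t * x * t * x^-1 * t * x = t * x * t * x * (t * x^-1 * t * x).
  by rewrite !mulgA.
by rewrite ct !mulgA mulgK.
Qed.

Lemma index_le2_normal (gT : finGroupType) (G H : {group gT}) :
  H \subset G -> #|G : H| <= 2 -> H <| G.
Proof.
move=> sHG; case iGH: #|G : H| (indexg_gt0 G H) => [|[|[|//]]] // _ _.
  by rewrite (index1g sHG iGH) normal_refl.
exact: index2_normal.
Qed.

Lemma prime_ndvd_fact_pred p : prime p -> ~~ (p %| p.-1`!).
Proof.
move=> p_pr; have p_gt1 := prime_gt1 p_pr; apply/negP=> dvd_p.
have := Wilson p_gt1; rewrite p_pr -addn1 (dvdn_addr _ dvd_p) dvdn1 => /esym/eqP p1.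
by rewrite p1 in p_gt1.
Qed.

Lemma commute_tperm (T : finType) (a b c d : T) :
  a != c -> a != d -> b != c -> b != d -> commute (tperm a b) (tperm c d).
Proof.
by move=> ac ad bc bd; rewrite /commute conjgC tpermJ !tpermD // eq_sym.
Qed.

Lemma odd_permX (T : finType) (s : {perm T}) n :
  odd_perm (s ^+ n) = odd n && odd_perm s.
Proof.
elim: n => [|n IHn]; first by rewrite odd_perm1.
by rewrite expgS odd_permM IHn /=; case: odd_perm; case: odd.
Qed.

Lemma odd_order_even_perm (T : finType) (s : {perm T}) :
  odd #[s] -> odd_perm s = false.
Proof.
by move=> odd_s; have := odd_permX s #[s]; rewrite expg_order odd_perm1 odd_s.
Qed.

Lemma normal_Sym_sub_Alt_eq (T : finType) (K : {group {perm T}}) :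
  4 < #|T| -> K <| 'Sym_T -> K \subset 'Alt_T -> K :!=: 1 -> K :=: 'Alt_T.
Proof.
move=> T_gt4 nKS sKA ntK; have /simpleP[_ simA] := simple_Alt5 T_gt4.
by case: (simA K (normalS sKA (Alt_subset T) nKS)) => // K1; rewrite K1 eqxx in ntK.
Qed.

Section KillingComponent.
Variables (gT : finGroupType) (G : {group gT}) (x : gT).
Hypothesis xG : x \in G.

Local Notation C := (x ^: G).
Local Notation R := (killing_graph G C).

Lemma killing_graphP (a b : gT) :
  reflect [/\ a \in C, b \in C, a != b & exists2 e : gT, e \in C & commute e (a * b)]
          (R a b).
Proof.
apply: (iffP and3P) => [[aC bC /andP[neq_ab]]|[aC bC neq_ab [e eC ce]]].
  by case/set0Pn=> e /setIP[/setIP[_ ce] eC]; split=> //; exists e => //; apply/cent1P.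
split=> //; rewrite /killing_adj /= neq_ab; apply/set0Pn; exists e.
rewrite inE eC andbT; apply/setIP; split; last exact/cent1P.
exact: subsetP (class_subG xG (subxx G)) e eC.
Qed.

Lemma killing_graphJ (a b g : gT) : g \in G -> R a b -> R (a ^ g) (b ^ g).
Proof.
move=> gG /killing_graphP[aC bC neq_ab [e eC ce]].
have CJ c : (c ^ g \in C) = (c \in C).
  by rewrite memJ_norm // (subsetP (class_norm x G)).
apply/killing_graphP; rewrite !CJ (inj_eq (@conjg_inj _ g)); split=> //.
by exists (e ^ g); rewrite ?CJ // /commute -!conjMg ce.
Qed.

Lemma connect_killingJ (a b g : gT) : g \in G ->
  connect R a b -> connect R (a ^ g) (b ^ g).
Proof.
move=> gG /connectP[s + ->]; elim: s a => [|c s IHs] a //= /andP[Rac /IHs].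
exact/connect_trans/connect1/killing_graphJ.
Qed.

Definition killing_comp_stab := [set g in G | connect R x (x ^ g)].

Lemma group_set_killing_comp_stab : group_set killing_comp_stab.
Proof.
apply/group_setP; split=> [|g h]; first by rewrite inE group1 conjg1 connect0.
rewrite !inE => /andP[gG Rxg] /andP[hG Rxh]; rewrite groupM //=.
by apply: connect_trans Rxh _; rewrite conjgM; apply: connect_killingJ.
Qed.

Canonical killing_comp_stab_group := Group group_set_killing_comp_stab.

Lemma killing_comp_stab_id : x \in killing_comp_stab.
Proof. by rewrite inE xG conjgE mulKg connect0. Qed.

Lemma killing_irreducible_comp_stab :
  G \subset killing_comp_stab -> killing_irreducible G C.
Proof.
move=> sGstab _ _ /imsetP[g gG ->] /imsetP[h hG ->].
have /setIdP[_ Rxh] := subsetP sGstab h hG.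
have /setIdP[_ Rxg'] := subsetP sGstab g^-1 (groupVr gG).
apply: connect_trans _ Rxh.
by have := connect_killingJ gG Rxg'; rewrite -conjgM mulVg conjg1.
Qed.

Lemma mem_comp_stab_commute h e : h \in G -> e \in C ->
  commute e (x * x ^ h) -> h \in killing_comp_stab.
Proof.
move=> hG eC ce; rewrite inE hG /=.
have [<-|neq_xxh] := eqVneq x (x ^ h); first exact: connect0.
by apply/connect1/killing_graphP; split; rewrite ?class_refl ?memJ_class //; exists e.
Qed.

Lemma norm_cycle_sub_comp_stab : 'N_G(<[x]>) \subset killing_comp_stab.
Proof.
apply/subsetP=> g /setIP[gG nxg]; apply: (mem_comp_stab_commute gG (class_refl G x)).
have /cycleP[i ->] : x ^ g \in <[x]> by rewrite memJ_norm ?cycle_id.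
exact/commuteM/commuteX/commute_refl.
Qed.

Lemma mem_comp_stab_conj_involution t n :
  t * t = 1 -> commute t (t ^ x) -> t * t ^ x \in G -> n * t \in G ->
  n \in 'N(<[x]>) -> x ^ t \in killing_comp_stab.
Proof.
move=> tt ct hG ntG nxn; have tV : t^-1 = t by apply/eqP; rewrite eq_invg_mul tt.
have h_stab : t * t ^ x \in killing_comp_stab.
  apply: (mem_comp_stab_commute hG (memJ_class x ntG)).
  rewrite mul_conj_involution_prod // conjgM.
  have /cycleP[j ->] : x ^ n \in <[x]> by rewrite memJ_norm ?cycle_id.
  by rewrite conjXg; apply/commuteX2/commute_refl.
have -> : x ^ t = (t * t ^ x * x^-1)^-1.
  by rewrite !conjgE !invMg !invgK tV !mulgA mulgV mul1g.
by rewrite groupV groupM ?groupV ?killing_comp_stab_id.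
Qed.

End KillingComponent.

Section PrimeCycle.
Variables (T : finType) (x : {perm T}).
Hypotheses (T_prime : prime #|T|) (ox : #[x] = #|T|).

Lemma eq_prime_cycle_orbit u i j : i < #|T| -> j < #|T| ->
  ((x ^+ i) u == (x ^+ j) u) = (i == j).
Proof.
move=> ltiT ltjT; apply/eqP/eqP=> [xij|-> //].
have : x ^+ i * (x ^+ j)^-1 \in 'C_<[x]>[u | 'P].
  rewrite inE groupM ?groupV ?mem_cycle //; apply/astab1P.
  by rewrite [act _ _ _]permM xij permK.
rewrite (perm_prime_astab T_prime ox) => /set1gP/eqP.
by rewrite -eq_mulgV1 eq_expg_mod_order ox !modn_small // => /eqP.
Qed.

Lemma prime_cycle_Sylow : #|T|.-Sylow('Sym_T) <[x]>.
Proof.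
rewrite /pHall subsetT /pgroup -orderE ox pnat_id //= -divgS ?subsetT //.
rewrite card_Sym -orderE ox p'natE // -{2}(prednK (prime_gt0 T_prime)) factS.
by rewrite prednK ?prime_gt0 // mulKn ?prime_gt0 // prime_ndvd_fact_pred.
Qed.

Lemma prime_cycle_Alt : 2 < #|T| -> x \in 'Alt_T.
Proof.
move=> T_gt2; rewrite Alt_even odd_order_even_perm // ox.
by case: (even_prime T_prime) T_gt2 => [->|].
Qed.

Lemma Frattini_prime_cycle : 2 < #|T| -> 'Alt_T * 'N_('Sym_T)(<[x]>) = 'Sym_T.
Proof.
move=> T_gt2; apply: Frattini_arg (Alt_normal T) _.
by apply: pHall_subl prime_cycle_Sylow; rewrite ?cycle_subG ?prime_cycle_Alt ?subsetT.
Qed.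

Lemma neq_prime_cycle_orbit2 u : 2 < #|T| -> u != (x ^+ 2) u.
Proof.
move=> T_gt2; have := eq_prime_cycle_orbit u (prime_gt0 T_prime) T_gt2.
by rewrite expg0 perm1 => /negbT.
Qed.

Lemma odd_perm_norm_prime_cycle :
  2 < #|T| -> exists2 n, n \in 'N(<[x]>) & odd_perm n.
Proof.
move=> T_gt2; case/card_gt0P: (prime_gt0 T_prime) => u _.
have : tperm u ((x ^+ 2) u) \in 'Alt_T * 'N_('Sym_T)(<[x]>).
  by rewrite Frattini_prime_cycle // inE.
case/mulsgP=> a n; rewrite Alt_even => /negbTE even_a /setIP[_ nN] tE; exists n => //.
by have := odd_tperm u ((x ^+ 2) u); rewrite neq_prime_cycle_orbit2 // tE odd_permM even_a.
Qed.

Lemma normal_prime_cycle_small (G : {group {perm T}}) :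
  #|T| <= 3 -> x \in G -> <[x]> <| G.
Proof.
move=> T_le3 xG; have sxG : <[x]> \subset G by rewrite cycle_subG.
apply: (index_le2_normal sxG).
rewrite -(leq_pmul2l (prime_gt0 T_prime)) -{1}ox orderE (Lagrange sxG).
apply: leq_trans (subset_leq_card (subsetT G)) _.
by rewrite card_Sym; case: #|T| T_prime T_le3 => [|[|[|[|]]]].
Qed.

Lemma gen_prime_cycle_conj_tperm (a b : T) : 4 < #|T| -> a != b ->
  <<[set x; x ^ tperm a b]>> = 'Alt_T.
Proof.
move=> T_gt4 neq_ab; set t := tperm a b.
have x_Alt : x \in 'Alt_T by rewrite prime_cycle_Alt // (leq_trans _ T_gt4).
have xt_Alt : x ^ t \in 'Alt_T by rewrite Alt_even odd_permJ -Alt_even.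
have x_gen : x \in <<[set x; x ^ t]>> by rewrite mem_gen // set21.
apply: (normal_Sym_sub_Alt_eq (K := <<[set x; x ^ t]>>%G) T_gt4).
- rewrite /normal subsetT /= -(gen_tperm_circular_shift T_prime neq_ab ox).
  rewrite gen_subG subUset !sub1set; apply/andP; split.
    apply: (subsetP (norm_gen _)).
    rewrite inE sub_conjg subUset !sub1set !mem_conjg invgK !inE eqxx orbT /=.
    have xtt : (x ^ t) ^ t = x by rewrite -conjgM tperm2 conjg1.
    by rewrite xtt eqxx.
  exact: (subsetP (normG _)).
- by rewrite gen_subG subUset !sub1set x_Alt xt_Alt.
apply/trivgPn; exists x => //; apply: contraTneq T_gt4 => x1.
by rewrite -ox x1 order1.
Qed.

Lemma commute_tperm_conj_cycle u : 3 < #|T| ->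
  commute (tperm u ((x ^+ 2) u)) (tperm u ((x ^+ 2) u) ^ x).
Proof.
move=> T_gt3; have -> : tperm u ((x ^+ 2) u) = tperm ((x ^+ 0) u) ((x ^+ 2) u).
  by rewrite expg0 perm1.
have xpt k : x ((x ^+ k) u) = (x ^+ k.+1) u by rewrite expgSr permM.
rewrite tpermJ !xpt; apply: commute_tperm;
  by rewrite eq_prime_cycle_orbit ?(leq_trans _ T_gt3).
Qed.

Section LargePrime.
Variable G : {group {perm T}}.
Hypotheses (T_gt4 : 4 < #|T|) (AltG : 'Alt_T \subset G).

Let T_gt2 : 2 < #|T|. Proof. exact: leq_trans T_gt4. Qed.
Let xG : x \in G. Proof. exact/(subsetP AltG)/prime_cycle_Alt. Qed.

Lemma mem_comp_stab_conj_tperm u :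
  x ^ tperm u ((x ^+ 2) u) \in killing_comp_stab G x.
Proof.
have [n nN odd_n] := odd_perm_norm_prime_cycle T_gt2.
have neq_u := neq_prime_cycle_orbit2 u T_gt2.
apply: (mem_comp_stab_conj_involution xG (n := n)) => //.
- exact: tperm2.
- exact/commute_tperm_conj_cycle/ltnW.
- by rewrite (subsetP AltG) // Alt_even odd_permM odd_permJ addbb.
by rewrite (subsetP AltG) // Alt_even odd_permM odd_n odd_tperm neq_u.
Qed.

Lemma Alt_sub_comp_stab : 'Alt_T \subset killing_comp_stab G x.
Proof.
case/card_gt0P: (prime_gt0 T_prime) => u _.
rewrite -(gen_prime_cycle_conj_tperm T_gt4 (neq_prime_cycle_orbit2 u T_gt2)).
by rewrite gen_subG subUset !sub1set mem_comp_stab_conj_tperm killing_comp_stab_id.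
Qed.

Lemma Sym_sub_comp_stab :
  'Sym_T \subset G -> 'Sym_T \subset killing_comp_stab G x.
Proof.
move=> SymG; rewrite -(Frattini_prime_cycle T_gt2) mul_subG ?Alt_sub_comp_stab //.
exact/(subset_trans _ (norm_cycle_sub_comp_stab xG))/setSI.
Qed.

End LargePrime.
End PrimeCycle.

Theorem lemma7p5 (p : nat) (G : {group {perm 'I_p}}) (x : {perm 'I_p}) :
  prime p ->
  (G :=: 'Sym_('I_p) \/ G :=: 'Alt_('I_p)) ->
  x \in G -> #[x] = p ->
  killing_irreducible G (x ^: G).
Proof.
move=> p_prime GSA xG ox.
have T_prime : prime #|'I_p| by rewrite card_ord.
have oxT : #[x] = #|'I_p| by rewrite card_ord.
apply: (killing_irreducible_comp_stab xG).
have [T_le3 | T_gt3] := leqP #|'I_p| 3.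
  apply: subset_trans (norm_cycle_sub_comp_stab xG).
  by rewrite subsetI subxx normal_norm ?normal_prime_cycle_small.
have T_gt4 : 4 < #|'I_p|.
  by rewrite ltn_neqAle T_gt3 andbT; apply: contraTneq T_prime => <-.
have AltG : 'Alt_('I_p) \subset G by case: GSA => ->; rewrite ?subsetT.
case: GSA => GE; rewrite {1}GE.
  by apply: (Sym_sub_comp_stab T_prime oxT T_gt4 AltG); rewrite GE.
exact: (Alt_sub_comp_stab T_prime oxT T_gt4 AltG).
Qed.
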